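(* Let $N\ge2$ be an integer and $u=1/N$. For all real $\sigma\ge0$ and all $x\in[1/N,1]$, \[\Bigl|\sum_{k=0}^{\lfloor\sigma\rfloor}\hat F^k\varphi_0(x)-a(\sigma)\Bigr|\le\frac{N(N-1)}{2},\qquad\text{where } a(\sigma):=\frac{1}{\log N}\sum_{k=0}^{\lfloor\sigma\rfloor}\lambda\bigl(F^{-k}[1/N,1]\bigr).\]
   Context: $\lambda$ is Lebesgue measure; $F$ is the Farey map, $F(x)=x/(1-x)$ for $0\le x\le1/2$, $F(x)=(1-x)/x$ for $1/2<x\le1$. $\mu$ is the measure $d\mu=dx/x$ on $[0,1]$. $\hat F$ is the transfer operator of $F$ with respect to $\mu$, given explicitly by $\hat Ff(x)=\dfrac{f(x/(1+x))+x\,f(1/(1+x))}{1+x}$. $\varphi_0(x):=x$ on $[0,1]$. Note $a(\sigma)$ equals the $\mu$-average of $\sum_{k=0}^{\lfloor\sigma\rfloor}\hat F^k\varphi_0$ over $[1/N,1]$. *)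

From Stdlib Require Import Reals Lra Lia ClassicalEpsilon.
Open Scope R_scope.

Definition Farey (x : R) : R :=
  if Rle_dec x (1/2) then x / (1 - x) else (1 - x) / x.

(* Transfer operator of F with respect to dmu = dx/x (explicit formula). *)
Definition Fhat (f : R -> R) : R -> R :=
  fun x => (f (x / (1 + x)) + x * f (1 / (1 + x))) / (1 + x).

Definition phi0 (x : R) : R := x.

(* Integral over [a,b] (Riemann integral; the value is independent of the
   integrability proof).  If f is not Riemann integrable, an arbitrary value
   is returned -- this case does not occur below. *)
Definition RInt (f : R -> R) (a b : R) : R :=
  epsilon (inhabits 0)
    (fun l => exists pr : Riemann_integrable f a b, RiemannInt pr = l).

Definition preim_ind (k : nat) (lo : R) (x : R) : R :=
  if Rle_dec lo (Nat.iter k Farey x) then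
    if Rle_dec (Nat.iter k Farey x) 1 then 1 else 0
  else 0.

(* Lebesgue measure of F^{-k}[lo,1] (a finite union of intervals in [0,1]). *)
Definition leb_preim (k : nat) (lo : R) : R := RInt (preim_ind k lo) 0 1.

Definition nfloor (s : R) : nat := Z.to_nat (Int_part s).

Definition a_sigma (N : nat) (sigma : R) : R :=
  / ln (INR N) * sum_f_R0 (fun k => leb_preim k (/ INR N)) (nfloor sigma).

(* Write S_n y = sum_{k <= n} Fhat^k phi0 y.  In the variable W = 1/y the
   recursion S_(n+1) = phi0 + Fhat S_n becomes an explicit functional recursion
   that preserves the class of C^2 functions on [1, oo) with -1 <= g' <= 0 <= g''.
   Hence S_n is nondecreasing on [1/N, 1] and S_n 1 - S_n (1/N) <= N - 1.
   On the other hand Fhat is dual to composition with F for dx/x, so the length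
   of F^-k [1/N, 1] is the integral of Fhat^k phi0 against dx/x over [1/N, 1];
   thus a(sigma) is the dx/x-average of S_n over [1/N, 1] (whose mass is log N)
   and lies between S_n (1/N) and S_n 1, as does S_n x. *)

From Stdlib Require Import Reals Lra ClassicalEpsilon.
From Coquelicot Require Import Coquelicot.
(* Imported last: Coquelicot also defines [RInt] and [nfloor]. *)
From Pilot Require Import Defs.
Open Scope R_scope.

Lemma diff_le_of_derive_le (f g df dg : R -> R) a b : a <= b ->
  (forall t, a <= t <= b -> is_derive f t (df t)) ->
  (forall t, a <= t <= b -> is_derive g t (dg t)) ->
  (forall t, a <= t <= b -> df t <= dg t) ->
  f b - f a <= g b - g a.
Proof.
  intros Hab Hf Hg Hle.
  destruct (Rle_lt_or_eq_dec _ _ Hab) as [Hlt | ->]; [|lra].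
  destruct (MVT_cor2 (fun t => g t - f t) (fun t => dg t - df t) a b Hlt)
    as [c [Hc Hcab]].
  - intros c Hc. apply is_derive_Reals, (is_derive_minus g f); auto.
  - assert (Hcd := Hle c ltac:(lra)). nra.
Qed.

Lemma le_of_derive_nonneg (f df : R -> R) a b : a <= b ->
  (forall t, a <= t <= b -> is_derive f t (df t)) ->
  (forall t, a <= t <= b -> 0 <= df t) -> f a <= f b.
Proof.
  intros Hab Hf Hpos.
  enough (0 - 0 <= f b - f a) by lra.
  apply (diff_le_of_derive_le (fun _ => 0) f (fun _ => 0) df a b); auto.
  intros t _. auto_derive; auto.
Qed.

Lemma diff_bounds_of_derive_bounds (f df : R -> R) lo hi a b : a <= b ->
  (forall t, a <= t <= b -> is_derive f t (df t)) ->
  (forall t, a <= t <= b -> lo <= df t <= hi) ->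
  lo * (b - a) <= f b - f a <= hi * (b - a).
Proof.
  intros Hab Hf Hbd.
  assert (Hlin : forall s t, is_derive (fun x => s * x) t s)
    by (intros s t; auto_derive; auto; ring).
  split.
  - replace (lo * (b - a)) with (lo * b - lo * a) by ring.
    apply (diff_le_of_derive_le (fun x => lo * x) f (fun _ => lo) df); auto.
    intros t Ht; apply Hbd; auto.
  - replace (hi * (b - a)) with (hi * b - hi * a) by ring.
    apply (diff_le_of_derive_le f (fun x => hi * x) df (fun _ => hi)); auto.
    intros t Ht; apply Hbd; auto.
Qed.

(* [farey_sum (S n) (/ W) = farey_step (fun W => farey_sum n (/ W)) W]; both
   arguments W + 1 and 1 + / W of g stay in [1, oo) when W does. *)
Definition farey_step (g : R -> R) (W : R) : R :=
  / W + (W * g (W + 1) + g (1 + / W)) / (W + 1).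

Definition farey_step' (g g1 : R -> R) (W : R) : R :=
  - / (W * W) + g1 (W + 1) * W / (W + 1) - g1 (1 + / W) / (W * W * (W + 1))
  + (g (W + 1) - g (1 + / W)) / ((W + 1) * (W + 1)).

Definition farey_step'' (g g1 g2 : R -> R) (W : R) : R :=
  2 / (W * W * W) + g2 (W + 1) * W / (W + 1)
  + g2 (1 + / W) / (W * W * W * W * (W + 1))
  + 2 * g1 (W + 1) / ((W + 1) * (W + 1))
  + g1 (1 + / W) * (4 * W + 2) / (W * W * W * ((W + 1) * (W + 1)))
  - 2 * (g (W + 1) - g (1 + / W)) / ((W + 1) * (W + 1) * (W + 1)).

Lemma is_derive_farey_step (g g1 g2 : R -> R) W : 1 <= W ->
  (forall t, 1 <= t -> is_derive g t (g1 t) /\ is_derive g1 t (g2 t)) ->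
  is_derive (farey_step g) W (farey_step' g g1 W)
  /\ is_derive (farey_step' g g1) W (farey_step'' g g1 g2 W).
Proof.
  intros HW Hg.
  assert (Hi : 0 < / W) by (apply Rinv_0_lt_compat; lra).
  destruct (Hg (W + 1)) as [Hu1 Hu2]; [lra|].
  destruct (Hg (1 + / W)) as [Hv1 Hv2]; [lra|].
  unfold farey_step, farey_step', farey_step''; split; auto_derive.
  all: try (repeat split; try (intro; nra); try lra; eexists; eassumption).
  all: change (fun x : R => g x) with g; change (fun x : R => g1 x) with g1.
  all: rewrite ?(is_derive_unique _ _ _ Hu1), ?(is_derive_unique _ _ _ Hv1),
          ?(is_derive_unique _ _ _ Hu2), ?(is_derive_unique _ _ _ Hv2).
  all: field; lra.
Qed.

Lemma farey_step'_bounds (g g1 : R -> R) W : 1 <= W ->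
  -1 <= g1 (1 + / W) <= g1 (W + 1) -> g1 (W + 1) <= 0 ->
  (W - / W) * g1 (1 + / W) <= g (W + 1) - g (1 + / W) <= (W - / W) * g1 (W + 1) ->
  -1 <= farey_step' g g1 W <= 0.
Proof.
  unfold farey_step'.
  set (a := g1 (W + 1)); set (b := g1 (1 + / W)); set (D := g (W + 1) - g (1 + / W)).
  intros HW [Hb Hba] Ha [HDlo HDup].
  assert (Hi1 : / W <= 1) by (rewrite <- Rinv_1; apply Rinv_le_contravar; lra).
  assert (HWW : / (W * W) <= / W) by (apply Rinv_le_contravar; nra).
  assert (Hu : / (W + 1) <= 1) by (rewrite <- Rinv_1; apply Rinv_le_contravar; lra).
  assert (HWW0 : 0 < / (W * W)) by (apply Rinv_0_lt_compat; nra).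
  split.
  - assert (E : - / (W * W) + a * W / (W + 1) - b / (W * W * (W + 1))
        + D / ((W + 1) * (W + 1)) + 1
      = (1 - / (W * W)) * (1 + b) + (a - b) * (W / (W + 1))
        + (D - (W - / W) * b) * / ((W + 1) * (W + 1))) by (field; lra).
    assert (0 <= (1 - / (W * W)) * (1 + b)) by (apply Rmult_le_pos; lra).
    assert (0 <= (a - b) * (W / (W + 1)))
      by (apply Rmult_le_pos; [lra | apply Rdiv_le_0_compat; lra]).
    assert (0 <= (D - (W - / W) * b) * / ((W + 1) * (W + 1)))
      by (apply Rmult_le_pos; [lra | left; apply Rinv_0_lt_compat; nra]).
    lra.
  - assert (E : - (- / (W * W) + a * W / (W + 1) - b / (W * W * (W + 1))
                  + D / ((W + 1) * (W + 1)))
      = / (W * W) * (1 - / (W + 1)) + (1 + b) * / (W * W * (W + 1))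
        + (- a) * (W / (W + 1) + (W - / W) * / ((W + 1) * (W + 1)))
        + ((W - / W) * a - D) * / ((W + 1) * (W + 1))) by (field; lra).
    assert (0 <= / (W * W) * (1 - / (W + 1))) by (apply Rmult_le_pos; lra).
    assert (0 <= (1 + b) * / (W * W * (W + 1)))
      by (apply Rmult_le_pos; [lra | left; apply Rinv_0_lt_compat; nra]).
    assert (0 <= W / (W + 1)) by (apply Rdiv_le_0_compat; lra).
    assert (0 <= (W - / W) * / ((W + 1) * (W + 1)))
      by (apply Rmult_le_pos; [lra | left; apply Rinv_0_lt_compat; nra]).
    assert (0 <= (- a) * (W / (W + 1) + (W - / W) * / ((W + 1) * (W + 1))))
      by (apply Rmult_le_pos; lra).
    assert (0 <= ((W - / W) * a - D) * / ((W + 1) * (W + 1)))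
      by (apply Rmult_le_pos; [lra | left; apply Rinv_0_lt_compat; nra]).
    lra.
Qed.

Lemma farey_step''_nonneg (g g1 g2 : R -> R) W : 1 <= W ->
  -1 <= g1 (W + 1) -> -1 <= g1 (1 + / W) ->
  g (W + 1) - g (1 + / W) <= (W - / W) * g1 (W + 1) ->
  0 <= g2 (W + 1) -> 0 <= g2 (1 + / W) ->
  0 <= farey_step'' g g1 g2 W.
Proof.
  unfold farey_step''.
  set (a := g1 (W + 1)); set (b := g1 (1 + / W)); set (D := g (W + 1) - g (1 + / W)).
  set (al := g2 (W + 1)); set (be := g2 (1 + / W)).
  intros HW Ha Hb HD Hal Hbe.
  assert (E : 2 / (W * W * W) + al * W / (W + 1) + be / (W * W * W * W * (W + 1))
      + 2 * a / ((W + 1) * (W + 1)) + b * (4 * W + 2) / (W * W * W * ((W + 1) * (W + 1)))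
      - 2 * D / ((W + 1) * (W + 1) * (W + 1))
    = al * (W / (W + 1)) + be * / (W * W * W * W * (W + 1))
      + 2 * ((W - / W) * a - D) * / ((W + 1) * (W + 1) * (W + 1))
      + 2 * (1 + a) * / (W * ((W + 1) * (W + 1)))
      + (1 + b) * (4 * W + 2) * / (W * W * W * ((W + 1) * (W + 1)))) by (field; lra).
  rewrite E.
  assert (0 < W * W) by nra. assert (0 < W * W * W) by nra. assert (0 < (W + 1) * (W + 1)) by nra.
  assert (0 <= al * (W / (W + 1))) by (apply Rmult_le_pos; [lra | apply Rdiv_le_0_compat; lra]).
  assert (0 <= be * / (W * W * W * W * (W + 1)))
    by (apply Rmult_le_pos; [lra | left; apply Rinv_0_lt_compat; nra]).
  assert (0 <= 2 * ((W - / W) * a - D) * / ((W + 1) * (W + 1) * (W + 1)))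
    by (apply Rmult_le_pos; [lra | left; apply Rinv_0_lt_compat; nra]).
  assert (0 <= 2 * (1 + a) * / (W * ((W + 1) * (W + 1))))
    by (apply Rmult_le_pos; [lra | left; apply Rinv_0_lt_compat; nra]).
  assert (0 <= (1 + b) * (4 * W + 2) * / (W * W * W * ((W + 1) * (W + 1))))
    by (apply Rmult_le_pos; [nra | left; apply Rinv_0_lt_compat; nra]).
  lra.
Qed.

Definition convex_nonincreasing_1lip (g : R -> R) : Prop :=
  exists g1 g2 : R -> R, forall W, 1 <= W ->
    (is_derive g W (g1 W) /\ is_derive g1 W (g2 W)) /\ -1 <= g1 W <= 0 /\ 0 <= g2 W.

Lemma farey_step_convex_nonincreasing_1lip (g : R -> R) :
  convex_nonincreasing_1lip g -> convex_nonincreasing_1lip (farey_step g).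
Proof.
  intros [g1 [g2 Hg]].
  exists (farey_step' g g1), (farey_step'' g g1 g2). intros W HW.
  assert (Hi : 0 < / W) by (apply Rinv_0_lt_compat; lra).
  assert (Hi1 : / W <= 1) by (rewrite <- Rinv_1; apply Rinv_le_contravar; lra).
  assert (Hd : forall t, 1 <= t -> is_derive g t (g1 t) /\ is_derive g1 t (g2 t))
    by (intros t Ht; apply Hg, Ht).
  set (u := W + 1); set (v := 1 + / W).
  assert (Hvu : 1 <= v <= u) by (unfold u, v; lra).
  assert (Huv : W - / W = u - v) by (unfold u, v; ring).
  assert (Hslope : forall t, v <= t <= u -> g1 v <= g1 t <= g1 u).
  { intros t Ht; split; apply (le_of_derive_nonneg g1 g2); try lra;
      intros s Hs; apply Hg; lra. }
  destruct (diff_bounds_of_derive_bounds g g1 (g1 v) (g1 u) v u) as [Hchord_lo Hchord_up].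
  { lra. }
  { intros t Ht; apply Hd; lra. }
  { exact Hslope. }
  destruct (Hg u) as [_ [Hu1 Hu2]]; [lra|]. destruct (Hg v) as [_ [Hv1 Hv2]]; [lra|].
  assert (Hmono : g1 v <= g1 u) by (apply Hslope; lra).
  split; [apply is_derive_farey_step; auto|].
  split.
  - apply farey_step'_bounds; fold u v; rewrite ?Huv; lra.
  - apply farey_step''_nonneg; fold u v; rewrite ?Huv; lra.
Qed.

Fixpoint farey_sum_inv (n : nat) : R -> R :=
  match n with
  | O => fun W => / W
  | S m => farey_step (farey_sum_inv m)
  end.

Lemma farey_sum_inv_convex_nonincreasing_1lip n : convex_nonincreasing_1lip (farey_sum_inv n).
Proof.
  induction n as [|n IH]; [|apply farey_step_convex_nonincreasing_1lip, IH].
  exists (fun W => - / (W * W)), (fun W => 2 / (W * W * W)). intros W HW.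
  assert (HWW : / (W * W) <= 1) by (rewrite <- Rinv_1; apply Rinv_le_contravar; nra).
  assert (0 < / (W * W)) by (apply Rinv_0_lt_compat; nra).
  split; [split; simpl; auto_derive; repeat split; try (intro; nra); field; lra|].
  split; [lra | apply Rdiv_le_0_compat; nra].
Qed.

Lemma farey_sum_inv_nonincreasing_1lip n W1 W2 : 1 <= W1 <= W2 ->
  farey_sum_inv n W2 <= farey_sum_inv n W1 <= farey_sum_inv n W2 + (W2 - W1).
Proof.
  intros HW. destruct (farey_sum_inv_convex_nonincreasing_1lip n) as [g1 [g2 Hg]].
  destruct (diff_bounds_of_derive_bounds (farey_sum_inv n) g1 (-1) 0 W1 W2); try lra;
    intros t Ht; apply Hg; lra.
Qed.

Definition farey_sum (n : nat) (y : R) : R :=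
  sum_f_R0 (fun k => Nat.iter k Fhat phi0 y) n.

Lemma Fhat_plus (f g : R -> R) y : Fhat (fun z => f z + g z) y = Fhat f y + Fhat g y.
Proof. unfold Fhat, Rdiv. ring. Qed.

Lemma farey_sum_S n y : farey_sum (S n) y = y + Fhat (farey_sum n) y.
Proof.
  induction n as [|n IH]; [reflexivity|].
  unfold farey_sum in *. rewrite tech5, IH.
  change (Nat.iter (S (S n)) Fhat phi0 y) with (Fhat (Nat.iter (S n) Fhat phi0) y).
  rewrite Rplus_assoc, <- Fhat_plus. reflexivity.
Qed.

Lemma farey_sum_inv_eq n W : 0 < W -> farey_sum_inv n W = farey_sum n (/ W).
Proof.
  revert W; induction n as [|n IH]; intros W HW; [reflexivity|].
  assert (Hi : 0 < / W) by (apply Rinv_0_lt_compat; lra).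
  rewrite farey_sum_S; simpl farey_sum_inv; unfold farey_step, Fhat.
  rewrite (IH (W + 1)), (IH (1 + / W)) by lra.
  replace (/ W / (1 + / W)) with (/ (W + 1)) by (field; lra).
  replace (1 / (1 + / W)) with (/ (1 + / W)) by (field; lra).
  field; lra.
Qed.

Lemma farey_sum_monotone_bounds n y1 y2 : 0 < y1 <= y2 -> y2 <= 1 ->
  farey_sum n y1 <= farey_sum n y2 <= farey_sum n y1 + (/ y1 - / y2).
Proof.
  intros Hy Hy2.
  rewrite <- (Rinv_inv y1), <- (Rinv_inv y2), <- !farey_sum_inv_eq, !Rinv_inv
    by (apply Rinv_0_lt_compat; lra).
  apply farey_sum_inv_nonincreasing_1lip. split.
  - rewrite <- Rinv_1; apply Rinv_le_contravar; lra.
  - apply Rinv_le_contravar; lra.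
Qed.

(* [preim_cdf k q - preim_cdf k p] is the length of F^-k [p, q]; the inverse
   branches of F are y / (1 + y) and 1 / (1 + y). *)
Fixpoint preim_cdf (k : nat) : R -> R :=
  match k with
  | O => fun y => y
  | S m => fun y => preim_cdf m (y / (1 + y)) - preim_cdf m (1 / (1 + y))
  end.

Lemma is_derive_preim_cdf k y : 0 < y ->
  is_derive (preim_cdf k) y (Nat.iter k Fhat phi0 y / y).
Proof.
  revert y; induction k as [|k IH]; intros y Hy.
  - simpl; unfold phi0; auto_derive; auto; field; lra.
  - assert (HL := IH (y / (1 + y)) ltac:(apply Rdiv_lt_0_compat; lra)).
    assert (HR := IH (1 / (1 + y)) ltac:(apply Rdiv_lt_0_compat; lra)).
    simpl preim_cdf; auto_derive.
    + repeat split; try lra; eexists; eassumption.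
    + change (fun x => preim_cdf k x) with (preim_cdf k).
      change (Nat.iter (S k) Fhat phi0 y) with (Fhat (Nat.iter k Fhat phi0) y).
      set (s := Nat.iter k Fhat phi0) in *.
      unfold Rdiv in HL, HR; rewrite (is_derive_unique _ _ _ HL), (is_derive_unique _ _ _ HR).
      unfold Fhat, Rdiv; field; lra.
Qed.

Definition cdf_sum (n : nat) (y : R) : R := sum_f_R0 (fun k => preim_cdf k y) n.

Lemma is_derive_cdf_sum n y : 0 < y -> is_derive (cdf_sum n) y (farey_sum n y / y).
Proof.
  intros Hy; induction n as [|n IH]; [exact (is_derive_preim_cdf 0 y Hy)|].
  change (cdf_sum (S n)) with (fun y => cdf_sum n y + preim_cdf (S n) y).
  replace (farey_sum (S n) y / y)
    with (plus (farey_sum n y / y) (Nat.iter (S n) Fhat phi0 y / y))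
    by (unfold farey_sum; rewrite tech5; unfold plus; simpl; field; lra).
  apply (is_derive_plus (cdf_sum n) (preim_cdf (S n)));
    [exact IH | apply is_derive_preim_cdf, Hy].
Qed.

Lemma cdf_sum_diff_bounds n c m M : 0 < c <= 1 ->
  (forall y, c <= y <= 1 -> m <= farey_sum n y <= M) ->
  m * (- ln c) <= cdf_sum n 1 - cdf_sum n c <= M * (- ln c).
Proof.
  intros Hc HB.
  assert (Hd : forall t, c <= t <= 1 -> is_derive (cdf_sum n) t (farey_sum n t / t))
    by (intros t Ht; apply is_derive_cdf_sum; lra).
  assert (Hln : forall a t, c <= t <= 1 -> is_derive (fun s => a * ln s) t (a / t))
    by (intros a t Ht; auto_derive; [lra | field; lra]).
  replace (m * - ln c) with (m * ln 1 - m * ln c) by (rewrite ln_1; ring).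
  replace (M * - ln c) with (M * ln 1 - M * ln c) by (rewrite ln_1; ring).
  split.
  - apply (diff_le_of_derive_le (fun s => m * ln s) _ (fun s => m / s)
      (fun t => farey_sum n t / t)); auto; try lra.
    intros t Ht; apply Rmult_le_compat_r; [left; apply Rinv_0_lt_compat; lra | apply HB, Ht].
  - apply (diff_le_of_derive_le _ (fun s => M * ln s) (fun t => farey_sum n t / t)
      (fun s => M / s)); auto; try lra.
    intros t Ht; apply Rmult_le_compat_r; [left; apply Rinv_0_lt_compat; lra | apply HB, Ht].
Qed.

Lemma RInt_of_is_RInt (f : R -> R) a b l : is_RInt f a b l -> Defs.RInt f a b = l.
Proof.
  intros H. unfold Defs.RInt.
  assert (Hex : exists l', exists pr : Riemann_integrable f a b, RiemannInt pr = l').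
  { exists (RiemannInt (ex_RInt_Reals_0 f a b (ex_intro _ l H))). eexists; reflexivity. }
  destruct (epsilon_spec (inhabits 0) _ Hex) as [pr <-].
  rewrite <- (RInt_Reals f a b pr). apply is_RInt_unique, H.
Qed.

Definition ind_cc (p q t : R) : R :=
  if Rle_dec p t then if Rle_dec t q then 1 else 0 else 0.

Lemma is_RInt_ind_cc p q : 0 <= p <= q -> q <= 1 -> is_RInt (ind_cc p q) 0 1 (q - p).
Proof.
  intros Hpq Hq.
  assert (Hconst : forall a b v, a <= b -> (forall x, a < x < b -> ind_cc p q x = v) ->
            is_RInt (ind_cc p q) a b ((b - a) * v)).
  { intros a b v Hab Hv. apply (is_RInt_ext (fun _ => v)).
    - intros x Hx; rewrite Rmin_left, Rmax_right in Hx by lra; symmetry; apply Hv, Hx.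
    - exact (is_RInt_const a b v). }
  assert (HA : is_RInt (ind_cc p q) 0 p ((p - 0) * 0))
    by (apply Hconst; [lra | intros x Hx; unfold ind_cc; repeat destruct (Rle_dec _ _); lra]).
  assert (HB : is_RInt (ind_cc p q) p q ((q - p) * 1))
    by (apply Hconst; [lra | intros x Hx; unfold ind_cc; repeat destruct (Rle_dec _ _); lra]).
  assert (HC : is_RInt (ind_cc p q) q 1 ((1 - q) * 0))
    by (apply Hconst; [lra | intros x Hx; unfold ind_cc; repeat destruct (Rle_dec _ _); lra]).
  replace (q - p) with ((p - 0) * 0 + (q - p) * 1 + (1 - q) * 0) by ring.
  exact (is_RInt_Chasles _ _ _ _ _ _ (is_RInt_Chasles _ _ _ _ _ _ HA HB) HC).
Qed.

Lemma ind_cc_ext p q a p' q' b :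
  (p <= a <-> p' <= b) -> (a <= q <-> b <= q') -> ind_cc p q a = ind_cc p' q' b.
Proof.
  intros E1 E2; unfold ind_cc.
  destruct (Rle_dec p a), (Rle_dec p' b), (Rle_dec a q), (Rle_dec b q'); tauto.
Qed.

Lemma ind_cc_ext_rev p q a p' q' b :
  (p <= a <-> b <= q') -> (a <= q <-> p' <= b) -> ind_cc p q a = ind_cc p' q' b.
Proof.
  intros E1 E2; unfold ind_cc.
  destruct (Rle_dec p a), (Rle_dec p' b), (Rle_dec a q), (Rle_dec b q'); tauto.
Qed.

Lemma ind_cc_out p q t : ~ (p <= t <= q) -> ind_cc p q t = 0.
Proof. intros H; unfold ind_cc; repeat destruct (Rle_dec _ _); tauto. Qed.

(* For q = 1 the point 1/2 lies in both branch preimages of [p, 1]. *)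
Lemma ind_cc_Farey p q y : 0 <= p <= q -> q <= 1 -> 0 <= y <= 1 ->
  ind_cc p q (Farey y) = ind_cc (p / (1 + p)) (q / (1 + q)) y
    + ind_cc (1 / (1 + q)) (1 / (1 + p)) y
    - (if Req_EM_T q 1 then ind_cc (1 / 2) (1 / 2) y else 0).
Proof.
  intros Hpq Hq Hy; unfold Farey; destruct (Rle_dec y (1 / 2)) as [Hl | Hl].
  - rewrite (ind_cc_ext p q _ (p / (1 + p)) (q / (1 + q)) y).
    2: rewrite <- Rle_div_r, Rle_div_l by lra; split; intros; nra.
    2: rewrite Rle_div_l, <- Rle_div_r by lra; split; intros; nra.
    destruct (Req_EM_T q 1) as [-> | Hq1].
    + replace (1 / (1 + 1)) with (1 / 2) by field.
      rewrite (ind_cc_ext (1 / 2) (1 / (1 + p)) y (1 / 2) (1 / 2) y); [ring | tauto |].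
      rewrite <- Rle_div_r by lra; split; intros; nra.
    + rewrite (ind_cc_out (1 / (1 + q))); [ring|].
      intros [H1 H2]; rewrite Rle_div_l in H1 by lra; nra.
  - rewrite (ind_cc_ext_rev p q _ (1 / (1 + q)) (1 / (1 + p)) y).
    2: rewrite <- !Rle_div_r by lra; split; intros; nra.
    2: rewrite !Rle_div_l by lra; split; intros; nra.
    rewrite (ind_cc_out (p / (1 + p))).
    + destruct (Req_EM_T q 1); [rewrite (ind_cc_out (1 / 2)); [ring | lra] | ring].
    + intros [H1 H2]; rewrite <- Rle_div_r in H2 by lra; nra.
Qed.

Lemma Farey_range y : 0 <= y <= 1 -> 0 <= Farey y <= 1.
Proof.
  intros Hy; unfold Farey; destruct (Rle_dec y (1 / 2));
    (split; [apply Rle_div_r | apply Rle_div_l]; lra).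
Qed.

Lemma iter_Farey_range k y : 0 <= y <= 1 -> 0 <= Nat.iter k Farey y <= 1.
Proof. intros Hy; induction k as [|k IH]; [exact Hy | apply Farey_range, IH]. Qed.

Lemma is_RInt_ind_cc_iter_Farey k p q : 0 <= p <= q -> q <= 1 ->
  is_RInt (fun x => ind_cc p q (Nat.iter k Farey x)) 0 1 (preim_cdf k q - preim_cdf k p).
Proof.
  revert p q; induction k as [|k IH]; intros p q Hpq Hq; [apply is_RInt_ind_cc; auto|].
  assert (Hinv : 1 / (1 + q) <= 1 / (1 + p))
    by (unfold Rdiv; rewrite !Rmult_1_l; apply Rinv_le_contravar; lra).
  assert (HL : is_RInt (fun x => ind_cc (p / (1 + p)) (q / (1 + q)) (Nat.iter k Farey x)) 0 1
                 (preim_cdf k (q / (1 + q)) - preim_cdf k (p / (1 + p)))).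
  { apply IH; [split|]; [apply Rle_div_r | | apply Rle_div_l]; try lra.
    replace (p / (1 + p)) with (1 - 1 / (1 + p)) by (field; lra).
    replace (q / (1 + q)) with (1 - 1 / (1 + q)) by (field; lra). lra. }
  assert (HR : is_RInt (fun x => ind_cc (1 / (1 + q)) (1 / (1 + p)) (Nat.iter k Farey x)) 0 1
                 (preim_cdf k (1 / (1 + p)) - preim_cdf k (1 / (1 + q)))).
  { apply IH; [split|]; [apply Rle_div_r | | apply Rle_div_l]; lra. }
  assert (HS := is_RInt_plus _ _ _ _ _ _ HL HR).
  assert (Hstep : forall x, 0 <= x <= 1 ->
    ind_cc p q (Nat.iter (S k) Farey x)
    = ind_cc (p / (1 + p)) (q / (1 + q)) (Nat.iter k Farey x)
      + ind_cc (1 / (1 + q)) (1 / (1 + p)) (Nat.iter k Farey x)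
      - (if Req_EM_T q 1 then ind_cc (1 / 2) (1 / 2) (Nat.iter k Farey x) else 0))
    by (intros x Hx; apply ind_cc_Farey; auto; apply iter_Farey_range, Hx).
  destruct (Req_EM_T q 1) as [Hq1 | Hq1].
  - assert (Hmid := IH (1 / 2) (1 / 2) ltac:(lra) ltac:(lra)).
    replace (preim_cdf (S k) q - preim_cdf (S k) p)
      with (minus (plus (preim_cdf k (q / (1 + q)) - preim_cdf k (p / (1 + p)))
                        (preim_cdf k (1 / (1 + p)) - preim_cdf k (1 / (1 + q))))
                  (preim_cdf k (1 / 2) - preim_cdf k (1 / 2)))
      by (simpl preim_cdf; unfold minus, plus, opp; simpl; ring).
    eapply is_RInt_ext; [| exact (is_RInt_minus _ _ _ _ _ _ HS Hmid)].
    intros x Hx; rewrite Rmin_left, Rmax_right in Hx by lra.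
    rewrite Hstep by lra; destruct (Req_EM_T q 1); [reflexivity | contradiction].
  - replace (preim_cdf (S k) q - preim_cdf (S k) p)
      with (plus (preim_cdf k (q / (1 + q)) - preim_cdf k (p / (1 + p)))
                 (preim_cdf k (1 / (1 + p)) - preim_cdf k (1 / (1 + q))))
      by (simpl preim_cdf; unfold plus; simpl; ring).
    eapply is_RInt_ext; [| exact HS].
    intros x Hx; rewrite Rmin_left, Rmax_right in Hx by lra.
    rewrite Hstep by lra; destruct (Req_EM_T q 1); [contradiction|].
    rewrite Rminus_0_r; reflexivity.
Qed.

Lemma leb_preim_cdf k c : 0 <= c <= 1 -> leb_preim k c = preim_cdf k 1 - preim_cdf k c.
Proof.
  intros Hc; apply RInt_of_is_RInt.
  exact (is_RInt_ind_cc_iter_Farey k c 1 Hc (Rle_refl 1)).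
Qed.

Lemma sum_leb_preim n c : 0 <= c <= 1 ->
  sum_f_R0 (fun k => leb_preim k c) n = cdf_sum n 1 - cdf_sum n c.
Proof.
  intros Hc; unfold cdf_sum; induction n as [|n IH]; [apply leb_preim_cdf, Hc|].
  rewrite !tech5, IH, leb_preim_cdf by exact Hc; ring.
Qed.

Theorem lemma1 (N : nat) (HN : (2 <= N)%nat) (sigma : R) (Hs : 0 <= sigma)
  (x : R) (Hx : / INR N <= x <= 1) :
  Rabs (sum_f_R0 (fun k => Nat.iter k Fhat phi0 x) (nfloor sigma)
        - a_sigma N sigma)
  <= INR N * (INR N - 1) / 2.
Proof.
  assert (HN2 : 2 <= INR N) by (apply le_INR in HN; simpl in HN; lra).
  set (n := nfloor sigma); set (c := / INR N).
  assert (Hc : 0 < c <= 1)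
    by (split; [apply Rinv_0_lt_compat | rewrite <- Rinv_1; apply Rinv_le_contravar]; lra).
  assert (HL : 0 < ln (INR N)) by (rewrite <- ln_1; apply ln_increasing; lra).
  assert (Hlnc : - ln c = ln (INR N)) by (unfold c; rewrite ln_Rinv by lra; ring).
  assert (Hrange : forall y, c <= y <= 1 -> farey_sum n c <= farey_sum n y <= farey_sum n 1)
    by (intros y Hy; split; apply farey_sum_monotone_bounds; lra).
  assert (Hosc : farey_sum n 1 <= farey_sum n c + (INR N - 1)).
  { destruct (farey_sum_monotone_bounds n c 1) as [_ H]; try lra.
    unfold c in H; rewrite Rinv_inv, Rinv_1 in H; exact H. }
  destruct (cdf_sum_diff_bounds n c _ _ Hc Hrange) as [Hlo Hup]. rewrite Hlnc in Hlo, Hup.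
  change (sum_f_R0 (fun k => Nat.iter k Fhat phi0 x) n) with (farey_sum n x).
  unfold a_sigma; fold n c; rewrite sum_leb_preim by lra.
  set (L := ln (INR N)) in *; set (D := cdf_sum n 1 - cdf_sum n c) in *.
  assert (HD : farey_sum n c <= / L * D <= farey_sum n 1).
  { rewrite Rmult_comm; split; [apply Rle_div_r | apply Rle_div_l]; lra. }
  destruct (Hrange x Hx).
  apply Rabs_le; split; nra.
Qed.
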